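(* Assume the standing setting and notation described in the context. Setting \[I_n=S^1\setminus B_{\frac12\mathrm{dist}(x_n,y_n)}(y_n),\] one has $\mathbb{P}(\nu_n(I_n)\ge 1/2)\ge 1/2$ for all $n\in\mathbb{Z}$.
   Context: Standing setting: $d\ge2$, $\mu$ a Borel probability on $\mathrm{GL}(\mathbb{R}^d)$ with $\int|\log\sigma_j(a)|d\mu(a)<\infty$ for all singular values. $\nu$ is an ergodic $\mu$-stationary probability on the space of complete flags $F=(S_0,\dots,S_d)$ in $\mathbb{R}^d$; for fixed $i\in\{1,\dots,d-1\}$, $F_i$ is $F$ with $S_i$ removed, $\nu_i$ is the projection of $\nu$, $\nu$ is the unique $\mu$-stationary probability projecting to $\nu_i$, and $x_i\mapsto\nu_{x_i}$ is a fixed Borel disintegration of $\nu$ over $\nu_i$. $(A(n))_{n\in\mathbb{Z}}$ i.i.d. with law $\mu$, $(F(n))_n$ random flags with law $\nu$, $((A(n),F(n)))_n$ stationary, $F(n)$ independent of $(A(m))_{m\ge n}$, $A(n+k)\cdots A(n)F(n)=F(n+k+1)$ for $k\ge0$; $S_j(n)$ the $j$-dimensional subspace of $F(n)$, $F_i(n)$ the incomplete flag. $\chi_1+\cdots+\chi_j=\mathbb{E}[\log|\det_{S_j(0)}(A(0))|]$. $\kappa_i=\mathbb{E}[\log\frac{dA(0)\nu_{F_i(0)}}{d\nu_{F_i(1)}}(F(1))]>0$ is assumed. $S_i'(n)$ is the (a.s. unique) $i$-dimensional subspace with $S_{i-1}(n)\subset S_i'(n)\subset S_{i+1}(n)$ and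 $\lim_k\frac1k\log|\det_{S_i'(n)}(A(n+k-1)\cdots A(n))|=\chi_1+\cdots+\chi_{i-1}+\chi_{i+1}$. Via a fixed Borel choice of isometries, the projective line of $S_{i+1}/S_{i-1}$ (angle metric) of each incomplete flag is identified with the circle $S^1$ with $\mathrm{dist}$ = half arc length. $\nu_n$ is the image of $\nu_{F_i(n)}$ on $S^1$, $x_n$, $y_n$ the points corresponding to $S_i(n)$, $S_i'(n)$; $B_r(x)$ is the $\mathrm{dist}$-ball. *)

From HB Require Import structures.
From mathcomp Require Import all_boot all_order all_algebra.
From mathcomp Require Import all_classical all_reals all_analysis.
From mathcomp Require Import lebesgue_measure measurable_realfun.
Set Implicit Arguments. Unset Strict Implicit. Unset Printing Implicit Defensive.
Import Order.TTheory GRing.Theory Num.Theory.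
Local Open Scope classical_set_scope.
Local Open Scope ring_scope.

Section Circle.
Variable R : realType.
Definition S1 : set (R * R) := [set u | u.1 ^+ 2 + u.2 ^+ 2 = 1].
(* dist = half of the arc length: half the angle between the unit vectors. *)
Definition cdist (u v : R * R) : R := acos (u.1 * v.1 + u.2 * v.2) / 2.
Definition cball (y : R * R) (r : R) : set (R * R) :=
  [set z | S1 z /\ cdist z y < r].
End Circle.

Local Open Scope ereal_scope.

Definition indep_rv (R : realType) d (Om : measurableType d) (P : probability Om R)
  d1 (T1 : measurableType d1) d2 (T2 : measurableType d2)
  (X : Om -> T1) (Y : Om -> T2) : Prop :=
  forall B1 B2, measurable B1 -> measurable B2 ->
    P (X @^-1` B1 `&` Y @^-1` B2) = P (X @^-1` B1) * P (Y @^-1` B2).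

Definition disintegration (R : realType) d1 (Fl : measurableType d1)
  d2 (Fli : measurableType d2) (pi : Fl -> Fli) (nu : probability Fl R)
  (kappa : Fli -> probability Fl R) : Prop :=
  (forall B, measurable B -> measurable_fun [set: Fli] (fun x => kappa x B)) /\
  (forall B C, measurable B -> measurable C ->
     nu (B `&` pi @^-1` C) =
     \int[pushforward nu pi]_(x in C) kappa x B).

From HB Require Import structures.
From mathcomp Require Import all_boot all_order all_algebra.
From mathcomp Require Import all_classical all_reals all_analysis.
From mathcomp Require Import lebesgue_measure measurable_realfun.
From mathcomp Require Import lra.
Import Order.TTheory GRing.Theory Num.Theory.
Local Open Scope classical_set_scope.
Local Open Scope ring_scope.
Set Implicit Arguments.
Unset Strict Implicit.
Unset Printing Implicit Defensive.

(* Once F_i(n) and the future (A(m))_{m >= n} are fixed, the point y_n is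
   fixed while F(n) is still distributed according to nu_{F_i(n)}: F(n) is
   independent of the future, and nu disintegrates over F_i.  It therefore
   suffices to show that for a probability mu and a measurable phi >= 0, with
   probability at least 1/2 a point t satisfies mu {phi >= phi t / 2} >= 1/2;
   apply this to phi = dist(., y_n) under nu_n.  Let s be the supremum of the
   levels r with mu {phi >= r} >= 1/2.  A point t failing the property has
   phi t / 2 >= s and phi t > 0, hence phi t > s, and mu {phi > s} <= 1/2 by
   continuity from below. *)

Section circle_distance.
Variable R : realType.
Implicit Types u v y : R * R.

Lemma S1_dot_itv u v : S1 u -> S1 v -> -1 <= u.1 * v.1 + u.2 * v.2 <= 1.
Proof.
rewrite /S1 /= => hu hv.
have h1 : 0 <= (u.1 - v.1) ^+ 2 + (u.2 - v.2) ^+ 2 by rewrite addr_ge0 // sqr_ge0.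
have h2 : 0 <= (u.1 + v.1) ^+ 2 + (u.2 + v.2) ^+ 2 by rewrite addr_ge0 // sqr_ge0.
apply/andP; split; nra.
Qed.

Lemma acos_nonincreasing (x y : R) : -1 <= x -> y <= 1 -> x <= y -> acos y <= acos x.
Proof.
move=> x_ge y_le xy.
have acos_itv t : -1 <= t <= 1 -> acos t \in `[0, pi].
  by move=> t_itv; rewrite in_itv /= acos_ge0 // acos_lepi.
have x_itv : -1 <= x <= 1 by rewrite x_ge (le_trans xy).
have y_itv : -1 <= y <= 1 by rewrite y_le (le_trans x_ge).
by rewrite leNgt -ltr_cos ?acos_itv // !acosK ?in_itv //= -leNgt.
Qed.

Lemma measurable_acos : measurable_fun (`[-1, 1] : set R) acos.
Proof.
(* acos is only monotone on [-1, 1]; clamping makes it monotone on all of R. *)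
pose clamp x : R := Num.max (-1) (Num.min 1 x).
have clamp_itv x : -1 <= clamp x <= 1.
  by rewrite le_max lexx ge_max ge_min lexx /=; lra.
have clampK x : x \in `[-1, 1] -> clamp x = x.
  by rewrite in_itv /= => /andP[x_ge x_le]; rewrite /clamp (min_r x_le) (max_r x_ge).
have : measurable_fun [set: R] (acos \o clamp).
  apply: nonincreasing_measurable => // x y xy /=.
  have /andP[cx_ge _] := clamp_itv x; have /andP[_ cy_le] := clamp_itv y.
  by apply: acos_nonincreasing => //; apply: le_max2 => //; apply: le_min2.
move=> /(measurable_funS measurableT (@subsetT _ (`[-1, 1] : set R))).
by apply: eq_measurable_fun => x; rewrite inE /= => /clampK ->.
Qed.

Lemma cdist_ge0 u v : S1 u -> S1 v -> 0 <= cdist u v.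
Proof. by move=> hu hv; rewrite /cdist divr_ge0 // acos_ge0 // S1_dot_itv. Qed.

Lemma preimage_S1_setD_cball (T : Type) (f : T -> R * R) y r :
  (forall t, S1 (f t)) ->
  f @^-1` (@S1 R `\` cball y r) = [set t | r <= cdist (f t) y].
Proof.
move=> f_S1; apply/seteqP; split => t /=.
  by move=> [_ /not_andP[//|/negP]]; rewrite -leNgt.
by move=> ry; split => // -[_]; apply/negP; rewrite -leNgt.
Qed.

Lemma measurable_cdist d (T : measurableType d) (f g : T -> R * R) :
  measurable_fun [set: T] f -> measurable_fun [set: T] g ->
  (forall t, S1 (f t)) -> (forall t, S1 (g t)) ->
  measurable_fun [set: T] (fun t => cdist (f t) (g t)).
Proof.
move=> mf mg f_S1 g_S1.
apply: measurable_funM; last exact: measurable_cst.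
apply: (measurable_comp _ _ measurable_acos) => //.
- by move=> _ [t _ <-]; rewrite /= in_itv /= S1_dot_itv.
- by apply: measurable_funD; apply: measurable_funM;
    apply: measurableT_comp => //.
Qed.
End circle_distance.

Lemma measurableT_preimage d1 d2 (T1 : measurableType d1) (T2 : measurableType d2)
  (f : T1 -> T2) (B : set T2) :
  measurable_fun [set: T1] f -> measurable B -> measurable (f @^-1` B).
Proof. by move=> mf mB; rewrite -[X in measurable X]setTI; exact: mf. Qed.

Lemma measurable_ler d (T : measurableType d) (R : realType) (f g : T -> R) :
  measurable_fun [set: T] f -> measurable_fun [set: T] g ->
  measurable [set t | f t <= g t].
Proof.
by move=> mf mg; apply: (measurableT_preimage (B := [set true]) (measurable_fun_ler mf mg)).
Qed.

Section halved_superlevel.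
Local Open Scope ereal_scope.
Context d (T : measurableType d) (R : realType) (mu : probability T R).
Variable phi : T -> R.
Hypotheses (mphi : measurable_fun [set: T] phi) (phi_ge0 : forall t, (0 <= phi t)%R).

Let psi (r : R) := mu [set t | (r <= phi t)%R].

Let measurable_superlevel r : measurable [set t | (r <= phi t)%R].
Proof.
rewrite (_ : [set t | _] = phi @^-1` `[r, +oo[); last first.
  by apply/seteqP; split => t /=; rewrite in_itv /= andbT.
exact: measurableT_preimage.
Qed.

Let measurable_strict_superlevel r : measurable [set t | (r < phi t)%R].
Proof.
rewrite (_ : [set t | _] = phi @^-1` `]r, +oo[); last first.
  by apply/seteqP; split => t /=; rewrite in_itv /= andbT.
exact: measurableT_preimage.
Qed.

Let psi_le r1 r2 : (r1 <= r2)%R -> psi r2 <= psi r1.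
Proof. by move=> r12; apply: le_measure; rewrite ?inE // => t /= /(le_trans r12). Qed.

Let psi0 : psi 0 = 1.
Proof.
rewrite /psi (_ : [set t | _] = setT) ?probability_setT //.
by apply/seteqP; split => // t _; exact: phi_ge0.
Qed.

Let good := [set r : R | (1 / 2)%:E <= psi r].

Let good_le r1 r2 : (r1 <= r2)%R -> good r2 -> good r1.
Proof. by move=> r12 /le_trans; apply; apply: psi_le. Qed.

Let measurable_good_level :
  measurable [set t | (1 / 2)%:E <= psi (phi t / 2)%R].
Proof.
apply: (measurableT_preimage (B := [set r | good (r / 2)%R]) mphi).
apply: is_interval_measurable => r1 r2 /= _ g2 r /andP[_ r_le].
by apply: good_le g2; rewrite ler_pM2r.
Qed.

Let bad_level_gt_sup t : ~ good (phi t / 2)%R -> has_sup good -> (sup good < phi t)%R.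
Proof.
move=> bad hs; have phi_gt0 : (0 < phi t)%R.
  rewrite lt_neqAle phi_ge0 andbT; apply/negP => /eqP phi0; apply: bad.
  by rewrite -phi0 mul0r /good /= psi0 lee_fin; lra.
suff : (sup good <= phi t / 2)%R by lra.
rewrite leNgt; apply/negP; rewrite -subr_gt0 => lt_sup.
have [r good_r lt_r] := sup_adherent (lt_sup : (0 < sup good - phi t / 2)%R) hs.
apply: bad; apply: good_le good_r; lra.
Qed.

Let measure_gt_sup : has_sup good -> mu [set t | (sup good < phi t)%R] <= (1 / 2)%:E.
Proof.
move=> hs; set s := sup good.
pose F (n : nat) := [set t | (s + n.+1%:R^-1 <= phi t)%R].
have mF n : measurable (F n) by exact: measurable_superlevel.
have ndF : nondecreasing_seq F.
  move=> n m nm; apply/subsetPset => t /=; apply: le_trans.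
  by rewrite lerD2l lef_pV2 ?posrE // ler_nat.
have UF : \bigcup_n F n = [set t | (s < phi t)%R].
  apply/seteqP; split => t /=.
    by move=> [n _] /=; apply: lt_le_trans; rewrite ltrDl invr_gt0.
  move=> s_lt; have [k hk] := ltr_add_invr s_lt.
  by exists k => //; apply: ltW.
have F_lt n : mu (F n) < (1 / 2)%:E.
  rewrite ltNge; apply/negP => good_n.
  have : (s + n.+1%:R^-1 <= s)%R by exact: (sup_upper_bound hs good_n).
  by rewrite gerDl leNgt invr_gt0 ltr0Sn.
have cvgF := @nondecreasing_cvg_mu _ _ _ mu _ mF (bigcupT_measurable F mF) ndF.
rewrite -UF -(cvg_lim _ cvgF) //; apply: lime_le; first exact: cvgP cvgF.
by apply: nearW => n; apply: ltW; exact: F_lt.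
Qed.

Lemma halved_superlevel_half :
  (1 / 2)%:E <= mu [set t | (1 / 2)%:E <= mu [set t' | (phi t / 2 <= phi t')%R]].
Proof.
set A := [set t | _]; have mAC := measurableC measurable_good_level.
suff : mu (~` A) <= (1 / 2)%:E.
  move=> AC_le; rewrite -(setCK A) probability_setC //.
  move: AC_le; rewrite -(fineK (fin_num_measure mu _ mAC)) -EFinB !lee_fin; lra.
have [hs|nhs] := pselect (has_sup good).
  apply: le_trans (measure_gt_sup hs); apply: le_measure.
  - by rewrite inE.
  - by rewrite inE; exact: measurable_strict_superlevel.
  - by move=> t /bad_level_gt_sup; apply.
have good0 : good 0%R by rewrite /good /= psi0 lee_fin; lra.
have /(has_supPn (ex_intro _ _ good0)) unbounded := nhs.
rewrite (_ : ~` A = set0) ?measure0 //; apply/seteqP; split => // t bad.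
have [r good_r lt_r] := unbounded (phi t / 2)%R.
by apply: bad; apply: good_le good_r; apply: ltW.
Qed.
End halved_superlevel.

Section probability_kernel.
Local Open Scope ereal_scope.
Context d d' (X : measurableType d) (Y : measurableType d') (R : realType).
Variable k : X -> probability Y R.
Hypothesis mk : forall U, measurable U -> measurable_fun [set: X] (fun x => k x U).

Let kmeasure : X -> {measure set Y -> \bar R} := fun x => k x.
HB.instance Definition _ := isKernel.Build _ _ X Y R kmeasure mk.
Let kmeasure_setT x : kmeasure x [set: Y] = 1. Proof. exact: probability_setT. Qed.
HB.instance Definition _ := Kernel_isProbability.Build _ _ X Y R kmeasure kmeasure_setT.

Lemma measurable_fun_xsection_prob_kernel A : measurable A ->
  measurable_fun [set: X] (fun x => k x (xsection A x)).
Proof. by move=> mA; apply: (measurable_fun_xsection_finite_kernel kmeasure); rewrite inE. Qed.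

Lemma measurable_prob_kernel_superlevel (f : X * Y -> R) (g : X -> R) c :
  measurable_fun [set: X * Y] f -> measurable_fun [set: X] g ->
  measurable [set x | c <= k x [set y | (g x <= f (x, y))%R]].
Proof.
move=> mf mg; rewrite -[X in measurable X]setTI; apply: measurable_lee => //.
have mA : measurable [set p : X * Y | (g p.1 <= f p)%R].
  by apply: measurable_ler => //; exact: measurableT_comp.
by apply: eq_measurable_fun (measurable_fun_xsection_prob_kernel mA) => x _; rewrite xsectionE.
Qed.

Section kprod.
Variable m : {measure set X -> \bar R}.

Definition measure_kprod (A : set (X * Y)) := \int[m]_x k x (xsection A x).

Let measure_kprod0 : measure_kprod set0 = 0.
Proof. by rewrite /measure_kprod integral0_eq // => x _; rewrite xsection0 measure0. Qed.

Let measure_kprod_ge0 A : 0 <= measure_kprod A.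
Proof. exact: integral_ge0. Qed.

Let measure_kprod_sigma_additive : semi_sigma_additive measure_kprod.
Proof.
move=> F mF tF mUF.
rewrite [X in _ --> X](_ : _ = \sum_(n <oo) measure_kprod (F n)).
  by apply/cvg_closeP; split; [exact: is_cvg_nneseries|rewrite closeE].
rewrite /measure_kprod -integral_nneseries //; last first.
  by move=> n; exact: measurable_fun_xsection_prob_kernel.
apply: eq_integral => x _; apply/esym/cvg_lim => //=; rewrite xsection_bigcup.
apply: (measure_sigma_additive _ (trivIset_xsection tF)) => n.
exact: measurable_xsection.
Qed.

HB.instance Definition _ := isMeasure.Build _ _ _ measure_kprod
  measure_kprod0 measure_kprod_ge0 measure_kprod_sigma_additive.

Lemma measure_kprodX A B : measurable A -> measurable B ->
  measure_kprod (A `*` B) = \int[m]_(x in A) k x B.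
Proof.
move=> mA mB; rewrite /measure_kprod [RHS]integral_mkcond; apply: eq_integral => x _.
rewrite patchE; case: ifPn => xA; first by rewrite in_xsectionX.
by rewrite notin_xsectionX // measure0.
Qed.

End kprod.

Section disintegration.
Variables (pi : Y -> X) (nu : probability Y R).
Hypothesis mpi : measurable_fun [set: Y] pi.
Hypothesis nu_disint : forall B C, measurable B -> measurable C ->
  nu (B `&` pi @^-1` C) = \int[pushforward nu pi]_(x in C) k x B.

HB.instance Definition _ := isMeasurableFun.Build _ _ _ _ pi mpi.
Let graph (y : Y) := (pi y, y).
Let mgraph : measurable_fun [set: Y] graph.
Proof. by apply: measurable_fun_pair => //; exact: measurable_id. Qed.
HB.instance Definition _ := isMeasurableFun.Build _ _ _ _ graph mgraph.

Lemma disintegration_graph D : measurable D ->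
  nu ((fun y => (pi y, y)) @^-1` D) = \int[pushforward nu pi]_x k x (xsection D x).
Proof.
move=> mD.
change (distribution nu graph D = measure_kprod (distribution nu pi) D).
pose C := [set A `*` B | A in @measurable _ X & B in @measurable _ Y].
apply: (@measure_unique _ _ _ C (fun=> setT)) => //.
- exact: measurable_prod_measurableType.
- move=> _ _ [A1 mA1 [B1 mB1 <-]] [A2 mA2 [B2 mB2 <-]].
  exists (A1 `&` A2); first exact: measurableI.
  by exists (B1 `&` B2); [exact: measurableI|rewrite setXI].
- by move=> _; exists setT => //; exists setT => //; rewrite setXTT.
- by rewrite bigcup_const.
- move=> _ [A mA [B mB <-]] /=; rewrite measure_kprodX // -nu_disint //.
  by congr (nu _); apply/seteqP; split => y [].
- by move=> _; rewrite (le_lt_trans (probability_le1 _ _)) ?ltry.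
Qed.
End disintegration.
End probability_kernel.

Section pushforward_probability.
Local Open Scope ereal_scope.
Context d d' (T : measurableType d) (T' : measurableType d') (R : realType).
Variables (P : probability T R) (X : T -> T').
Hypothesis mX : measurable_fun [set: T] X.

Lemma cst_le_integral_pushforward (f : T' -> \bar R) (c : R) :
  measurable_fun [set: T'] f -> (0 <= c)%R -> (forall t, c%:E <= f t) ->
  c%:E <= \int[pushforward P X]_t f t.
Proof.
move=> mf c_ge0 c_le.
apply: le_trans (ge0_le_integral _ _ _ _ mf (fun t _ => c_le t)) => //.
by rewrite integral_cst //= /pushforward preimage_setT probability_setT mule1.
Qed.
End pushforward_probability.

Section independent_pair.
Local Open Scope ereal_scope.
Context (R : realType) dO (Om : measurableType dO) (P : probability Om R).
Context d1 (T1 : measurableType d1) d2 (T2 : measurableType d2).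
Variables (X : Om -> T1) (Y : Om -> T2) (nu : probability T1 R).
Hypotheses (mX : measurable_fun [set: Om] X) (mY : measurable_fun [set: Om] Y).
Hypothesis lawX : forall B, measurable B -> P (X @^-1` B) = nu B.
Hypothesis XY_indep : indep_rv P X Y.

HB.instance Definition _ := isMeasurableFun.Build _ _ _ _ Y mY.
Let pairXY w := (X w, Y w).
Let mpairXY : measurable_fun [set: Om] pairXY.
Proof. exact: measurable_fun_pair. Qed.
HB.instance Definition _ := isMeasurableFun.Build _ _ _ _ pairXY mpairXY.

Lemma indep_rv_preimage_pair D : measurable D ->
  P ((fun w => (X w, Y w)) @^-1` D) = \int[pushforward P Y]_u nu (ysection D u).
Proof.
move=> mD; pose Q := distribution P Y.
have lawXY A B : measurable A -> measurable B ->
    distribution P pairXY (A `*` B) = nu A * Q B.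
  move=> mA mB; rewrite /= /pushforward -lawX // -XY_indep //.
change (distribution P pairXY D = (nu \x^ Q) D).
rewrite -(product_measure_unique lawXY mD).
by apply: product_measure_unique => // A B mA mB; exact: product_measure2E.
Qed.
End independent_pair.

Section halved_superlevel_disintegration.
Local Open Scope ereal_scope.
Context (R : realType) dO (Om : measurableType dO) (P : probability Om R).
Context dF (Fl : measurableType dF) dI (Fli : measurableType dI) dW (W : measurableType dW).
Variables (pi : Fl -> Fli) (nu : probability Fl R) (kappa : Fli -> probability Fl R).
Hypotheses (mpi : measurable_fun [set: Fl] pi) (hdis : disintegration pi nu kappa).
Variables (X : Om -> Fl) (U : Om -> W).
Hypotheses (mX : measurable_fun [set: Om] X) (mU : measurable_fun [set: Om] U).
Hypothesis lawX : forall B, measurable B -> P (X @^-1` B) = nu B.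
Hypothesis XU_indep : indep_rv P X U.
Variable phi : Fli * Fl * W -> R.
Hypotheses (mphi : measurable_fun [set: Fli * Fl * W] phi)
  (phi_ge0 : forall q, (0 <= phi q)%R).

Let good := [set q : Fli * Fl * W |
  (1 / 2)%:E <= kappa q.1.1 [set S | (phi q / 2 <= phi (q.1.1, S, q.2))%R]].

Let measurable_good : measurable good.
Proof.
have mkappa B : measurable B ->
    measurable_fun [set: Fli * Fl * W] (fun q => kappa q.1.1 B).
  by move=> mB; apply: measurableT_comp (hdis.1 B mB) _; apply: measurableT_comp.
apply: (measurable_prob_kernel_superlevel mkappa (f := fun p => phi (p.1.1.1, p.2, p.1.2))).
  apply: measurableT_comp mphi _.
  by apply: measurable_fun_pair; [apply: measurable_fun_pair|];
    repeat apply: measurableT_comp.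
by apply: measurable_funM => //; exact: measurable_cst.
Qed.

Let good_ysection_half u : (1 / 2)%:E <= nu [set S | good (pi S, S, u)].
Proof.
have mgood_u : measurable (ysection good u) by exact: measurable_ysection.
rewrite (_ : [set S | _] = (fun S => (pi S, S)) @^-1` ysection good u); last first.
  by rewrite ysectionE.
rewrite (disintegration_graph hdis.1 mpi hdis.2 mgood_u).
apply: (cst_le_integral_pushforward _ mpi) => // [|a].
  exact (measurable_fun_xsection_prob_kernel hdis.1 mgood_u).
have mphi_a : measurable_fun [set: Fl] (fun S => phi (a, S, u)).
  by apply: measurableT_comp mphi _; apply: measurable_fun_pair => //; exact: measurable_fun_pair.
rewrite xsectionE ysectionE.
exact (halved_superlevel_half (kappa a) mphi_a (fun S => phi_ge0 _)).
Qed.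

Lemma indep_halved_superlevel_half :
  (1 / 2)%:E <= P [set w | (1 / 2)%:E <= kappa (pi (X w))
    [set S | (phi (pi (X w), X w, U w) / 2 <= phi (pi (X w), S, U w))%R]].
Proof.
pose D := [set p : Fl * W | good (pi p.1, p.1, p.2)].
have mD : measurable D.
  apply: measurableT_preimage measurable_good; apply: measurable_fun_pair => //.
  by apply: measurable_fun_pair => //; exact: measurableT_comp mpi _.
rewrite [X in P X](_ : _ = (fun w => (X w, U w)) @^-1` D) //.
rewrite (indep_rv_preimage_pair mX mU lawX XU_indep mD).
apply: (cst_le_integral_pushforward _ mU) => // [|u].
  exact: measurable_fun_ysection.
by rewrite ysectionE; exact: good_ysection_half.
Qed.

End halved_superlevel_disintegration.

Theorem lemma6 (R : realType)
  (* probability space *)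
  (dO : measure_display) (Om : measurableType dO) (P : probability Om R)
  (* space of complete flags, of incomplete flags F_i, forgetting map F |-> F_i *)
  (dF : measure_display) (Fl : measurableType dF)
  (dI : measure_display) (Fli : measurableType dI)
  (pi : Fl -> Fli) (mpi : measurable_fun [set: Fl] pi)
  (* the stationary measure nu and a fixed Borel disintegration x_i |-> nu_{x_i} *)
  (nu : probability Fl R) (kappa : Fli -> probability Fl R)
  (hdis : disintegration pi nu kappa)
  (* space of future matrix sequences (A(m))_{m >= n} *)
  (dW : measure_display) (W : measurableType dW)
  (* random flags F(n) and futures Fut(n) = (A(m))_{m >= n} *)
  (F : int -> Om -> Fl) (Fut : int -> Om -> W)
  (mF : forall n, measurable_fun [set: Om] (F n))
  (mFut : forall n, measurable_fun [set: Om] (Fut n))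
  (lawF : forall n B, measurable B -> P (F n @^-1` B) = nu B)
  (indF : forall n, indep_rv P (F n) (Fut n))
  (* Borel identification of the projective line of S_{i+1}/S_{i-1} of an
     incomplete flag with S^1: theta x S is the point of S^1 corresponding
     to the i-dimensional subspace S_i of the flag S *)
  (theta : Fli * Fl -> R * R)
  (mtheta : measurable_fun [set: Fli * Fl] theta)
  (theta_S1 : forall p, S1 (theta p))
  (* S_i'(n) is determined (measurably) by F_i(n) and (A(m))_{m >= n};
     Ysel gives its point on S^1 *)
  (Ysel : Fli * W -> R * R)
  (mYsel : measurable_fun [set: Fli * W] Ysel)
  (Ysel_S1 : forall p, S1 (Ysel p)) :
  let Fi n w := pi (F n w) in
  let x n w := theta (Fi n w, F n w) in
  let y n w := Ysel (Fi n w, Fut n w) in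
  (* nu_n = image of nu_{F_i(n)} on S^1 *)
  let nun n w (B : set (R * R)) :=
      kappa (Fi n w) ((fun S => theta (Fi n w, S)) @^-1` B) in
  let In n w := @S1 R `\` cball (y n w) (cdist (x n w) (y n w) / 2) in
  forall n : int,
    (P [set w | ((1 / 2)%:E <= nun n w (In n w))%E] >= (1 / 2)%:E)%E.
Proof.
move=> Fi x y nun In n.
pose phi (q : Fli * Fl * W) := cdist (theta q.1) (Ysel (q.1.1, q.2)).
have nunE w : nun n w (In n w) = kappa (Fi n w)
    [set S | (phi (Fi n w, F n w, Fut n w) / 2 <= phi (Fi n w, S, Fut n w))%R].
  by rewrite /nun /In preimage_S1_setD_cball.
under eq_set do rewrite nunE.
apply: (indep_halved_superlevel_half mpi hdis (mF n) (mFut n) (lawF n) (indF n)).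
  apply: measurable_cdist => //; apply: measurableT_comp => //.
  by apply: measurable_fun_pair => //; apply: measurableT_comp.
by move=> q; exact: cdist_ge0.
Qed.
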